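(* Let $\mathbb{F}\in\{\mathbb{R},\mathbb{C}\}$, $N\ge2$, and let $\mathcal{P}(M,N)$ be the set of Parseval frames for $\mathbb{F}^N$ with $M$ vectors. Suppose an equiangular Parseval frame exists in $\mathcal{P}(M,N)$. Then $\Phi\in\mathcal{P}(M,N)$ maximizes the $2$-nuclear energy $NE_2$ over $\mathcal{P}(M,N)$ if and only if $\Phi$ is an equiangular Parseval frame.
   Context: A Parseval frame for $\mathbb{F}^N$ is a family $\{\varphi_i\}_{i=1}^M\subseteq\mathbb{F}^N$ whose $N\times M$ matrix $\Phi$ (columns $\varphi_i$) satisfies $\Phi\Phi^*=I$; it is equiangular if all $\|\varphi_i\|$ are equal and all $|\langle\varphi_i,\varphi_j\rangle|$, $i\ne j$, are equal. For $K\subseteq[M]$, $\Phi_K$ is the submatrix of columns indexed by $K$. The nuclear norm of a matrix $F$ is $\|F\|_*=\sum_i\sigma_i(F)$, the sum of its singular values. The $k$-nuclear energy is $NE_k(\Phi)=\sum_{|K|=k}\|\Phi_K\|_*$. *)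

(* Scalars: C = R[i] (complex numbers over a real field R : realType);
   the real case F = R is encoded as matrices over C with real entries. *)
From HB Require Import structures.
From mathcomp Require Import all_boot all_order all_algebra.
From mathcomp Require Import reals complex.
Set Implicit Arguments. Unset Strict Implicit. Unset Printing Implicit Defensive.
Import Order.TTheory GRing.Theory Num.Theory.
Local Open Scope ring_scope.
Local Open Scope complex_scope.

Inductive scalar_field := FieldR | FieldC.

Section Frames.
Variable R : realType.
Local Notation C := R[i].

Definition in_field (F : scalar_field) (x : C) : bool :=
  match F with FieldR => x \is Num.real | FieldC => true end.

Definition adjmx m n (A : 'M[C]_(m, n)) : 'M[C]_(n, m) :=
  \matrix_(i, j) (A j i)^*.

Definition inner n (x y : 'cV[C]_n) : C := \sum_k x k 0 * (y k 0)^*.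
Definition vnorm n (x : 'cV[C]_n) : C := sqrtC (inner x x).

(* singular values: square roots of the eigenvalues (with multiplicity,
   i.e. the roots of the characteristic polynomial) of A^* A *)
Definition eig_seq n (B : 'M[C]_n) : seq C :=
  sval (closed_field_poly_normal (char_poly B)).
Definition singular_values m n (A : 'M[C]_(m, n)) : seq C :=
  [seq sqrtC z | z <- eig_seq (adjmx A *m A)].
Definition nuclear_norm m n (A : 'M[C]_(m, n)) : C :=
  \sum_(s <- singular_values A) s.

Definition subcols N M (Phi : 'M[C]_(N, M)) (K : {set 'I_M}) : 'M[C]_(N, #|K|) :=
  colsub (fun i : 'I_#|K| => enum_val i) Phi.

Definition nuclear_energy N M (k : nat) (Phi : 'M[C]_(N, M)) : C :=
  \sum_(K : {set 'I_M} | #|K| == k) nuclear_norm (subcols Phi K).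

Definition parseval_frame (F : scalar_field) N M (Phi : 'M[C]_(N, M)) : Prop :=
  (forall i j, in_field F (Phi i j)) /\ Phi *m adjmx Phi = 1%:M.

Definition equiangular N M (Phi : 'M[C]_(N, M)) : Prop :=
  (forall i j : 'I_M, vnorm (col i Phi) = vnorm (col j Phi)) /\
  (forall i j k l : 'I_M, i != j -> k != l ->
     `|inner (col i Phi) (col j Phi)| = `|inner (col k Phi) (col l Phi)|).

Definition equiangular_parseval_frame (F : scalar_field) N M (Phi : 'M[C]_(N, M)) :=
  parseval_frame F Phi /\ equiangular Phi.

End Frames.

From HB Require Import structures.
From mathcomp Require Import all_boot all_order all_algebra.
From mathcomp Require Import reals complex.
From mathcomp Require Import ring.
Import Order.TTheory GRing.Theory Num.Theory.
Local Open Scope ring_scope.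
Set Implicit Arguments. Unset Strict Implicit. Unset Printing Implicit Defensive.

(* For a two-element K, the nuclear norm of Phi_K is sqrt(s_K + 2 sqrt(p_K)), where
   s_K and p_K are the trace and determinant of the 2x2 Gram block G_K of Phi.
   For a Parseval frame G is an orthogonal projection of trace N, so
   sum_K s_K = (M - 1) N and sum_K p_K = (N^2 - N) / 2 are the same for all frames.
   The map (s, p) |-> sqrt(s + 2 sqrt p) lies below its tangent plane, touching it only
   at the point of tangency.  An equiangular Parseval frame has (s_K, p_K) = (s0, p0)
   for every K, and summing the tangent-plane bound at (s0, p0), which is affine, gives
   NE_2(Psi) <= NE_2(equiangular frame), with equality iff every (s_K, p_K) = (s0, p0).
   That last condition forces constant diagonal and constant |G_ij|, i.e. equiangularity. *)

Section TwoElementSets.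
Variables (T : finType) (V : zmodType).

Lemma sum_set2 (F : T -> V) i j : i != j ->
  \sum_(x in [set i; j]) F x = F i + F j.
Proof. by move=> ij; rewrite big_setU1 ?big_set1 // inE. Qed.

Lemma eq_set2_card2 (K : {set T}) i j : i != j ->
  (K == [set i; j]) = [&& #|K| == 2%N, i \in K & j \in K].
Proof.
move=> ij; apply/eqP/and3P => [->|[/eqP cK iK jK]].
  by rewrite cards2 ij !inE !eqxx orbT.
apply/esym/eqP; rewrite eqEcard cards2 ij cK leqnn andbT.
by apply/subsetP => x; rewrite !inE => /orP[]/eqP->.
Qed.

Lemma sum_card2_sets (h : T -> T -> V) : (forall x, h x x = 0) ->
  \sum_(K : {set T} | #|K| == 2%N) \sum_(x in K) \sum_(y in K) h x y
  = \sum_x \sum_y h x y.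
Proof.
move=> h0.
transitivity (\sum_(K : {set T} | #|K| == 2%N) \sum_x \sum_y
   (if (x \in K) && (y \in K) then h x y else 0)).
  apply: eq_bigr => K _; rewrite big_mkcond; apply: eq_bigr => x _.
  by case: (x \in K) => /=; [rewrite big_mkcond | rewrite big1].
rewrite exchange_big; apply: eq_bigr => x _.
rewrite exchange_big; apply: eq_bigr => y _.
have [<-|xy] := eqVneq x y; first by rewrite h0 big1 // => K _; case: ifP.
rewrite -big_mkcondr (eq_bigl (pred1 [set x; y])) ?big_pred1_eq // => K.
by rewrite /= eq_set2_card2 // andbA.
Qed.

Lemma sum_card2_sets_mem (g : T -> V) :
  \sum_(K : {set T} | #|K| == 2%N) \sum_(x in K) g x = (\sum_x g x) *+ #|T|.-1.
Proof.
transitivity (\sum_(K : {set T} | #|K| == 2%N) \sum_(x in K) \sum_(y in K) g x *+ (x != y)).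
  apply: eq_bigr => _ /cards2P[a [b [ab ->]]].
  by rewrite !sum_set2 // !eqxx ab eq_sym ab add0r addr0.
rewrite sum_card2_sets => [|x]; last by rewrite eqxx.
rewrite -sumrMnl; apply: eq_bigr => x _; rewrite sumrMnr; congr (_ *+ _).
rewrite -(cardC1 x) -sum1_card [RHS]big_mkcond; apply: eq_bigr => y _.
by rewrite !inE eq_sym; case: (y != x).
Qed.

End TwoElementSets.

Section CharPolySplit.
Variable R : comNzRingType.

Lemma char_poly_split_size n (A : 'M[R]_n) (r : seq R) :
  char_poly A = \prod_(z <- r) ('X - z%:P) -> size r = n.
Proof. by move=> splitA; have := size_char_poly A; rewrite splitA size_prod_XsubC => -[]. Qed.

Lemma char_poly_split_det n (A : 'M[R]_n) (r : seq R) :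
  char_poly A = \prod_(z <- r) ('X - z%:P) -> \det A = \prod_(z <- r) z.
Proof.
move=> splitA; have := char_poly_det A.
rewrite splitA coef0_prod_XsubC (char_poly_split_size splitA) => /esym.
exact: (can_inj (signrMK n)).
Qed.

Lemma char_poly_split_trace n (A : 'M[R]_n.+1) (r : seq R) :
  char_poly A = \prod_(z <- r) ('X - z%:P) -> \tr A = \sum_(z <- r) z.
Proof.
move=> splitA; have := char_poly_trace A (ltn0Sn n).
rewrite splitA -{1}(char_poly_split_size splitA) coefPn_prod_XsubC.
  by move/oppr_inj.
by rewrite (char_poly_split_size splitA).
Qed.

End CharPolySplit.

Section PrincipalMinors.
Variables (F : numFieldType) (n : nat).

Definition minor2 (B : 'M[F]_n) i j := B i i * B j j - B i j * B j i.

Definition minor2_sum (B : 'M[F]_n) := \sum_i \sum_j minor2 B i j / 2.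

Lemma minor2_sum_trace (B : 'M[F]_n) :
  minor2_sum B = ((\tr B) ^+ 2 - \tr (B *m B)) / 2.
Proof.
rewrite /minor2_sum /mxtrace; under eq_bigr do rewrite -mulr_suml.
rewrite -mulr_suml; congr (_ / _); rewrite expr2 mulr_suml -sumrB.
by apply: eq_bigr => i _; rewrite mulr_sumr mxE -sumrB.
Qed.

End PrincipalMinors.

Lemma det_mx2 (F : numFieldType) (B : 'M[F]_2) : \det B = minor2_sum B.
Proof.
rewrite /minor2_sum /minor2 (expand_det_row B 0) /cofactor.
rewrite !big_ord_recl !big_ord0 !det_mx11 !mxE /=.
have -> : (0 : 'I_2) = ord0 by apply: val_inj.
have -> : lift ord0 (0 : 'I_1) = lift ord0 ord0 by apply: val_inj.
have -> : lift (lift ord0 ord0) (0 : 'I_1) = ord0 by apply: val_inj.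
by rewrite expr0 expr1; field.
Qed.

Section SquareRoots.
Variable C : numClosedFieldType.

Lemma sqrtCD_sqrtC (a b : C) : 0 <= a -> 0 <= b ->
  sqrtC a + sqrtC b = sqrtC (a + b + 2 * sqrtC (a * b)).
Proof.
move=> a_ge0 b_ge0; rewrite sqrtCM ?nnegrE //.
have -> : a + b + 2 * (sqrtC a * sqrtC b) = (sqrtC a + sqrtC b) ^+ 2.
  by rewrite -{1}(sqrtCK a) -{1}(sqrtCK b); ring.
by rewrite sqrCK // addr_ge0 ?sqrtC_ge0.
Qed.

Lemma sqrtC_leif_tangent (t t0 : C) : 0 <= t -> 0 < t0 ->
  sqrtC t <= (t + t0) / (2 * sqrtC t0) ?= iff (t == t0).
Proof.
move=> t_ge0 t0_gt0; have r0_gt0 : 0 < 2 * sqrtC t0 by rewrite mulr_gt0 ?sqrtC_gt0.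
rewrite -(mono_leif (ler_pM2r r0_gt0)) divfK ?lt0r_neq0 // -eqr_sqrtC.
rewrite -{2}(sqrtCK t) -{2}(sqrtCK t0) mulrCA mulr_natl.
by apply: real_leif_mean_square_scaled; apply: sqrtC_real => //; apply: ltW.
Qed.

Definition pair_nuc (s p : C) := sqrtC (s + 2 * sqrtC p).

Definition pair_tangent (s0 p0 s p : C) :=
  (s + (p + p0) / sqrtC p0 + (s0 + 2 * sqrtC p0)) / (2 * sqrtC (s0 + 2 * sqrtC p0)).

Lemma pair_nuc_leif_tangent (s0 p0 s p : C) :
  0 <= s0 -> 0 < p0 -> 0 <= s -> 0 <= p ->
  pair_nuc s p <= pair_tangent s0 p0 s p ?= iff (s == s0) && (p == p0).
Proof.
move=> s0_ge0 p0_gt0 s_ge0 p_ge0.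
have two_p0 : (p0 + p0) / sqrtC p0 = 2 * sqrtC p0.
  by rewrite -{1 2}(sqrtCK p0); field; rewrite sqrtC_eq0 gt_eqF.
set u := s + (p + p0) / sqrtC p0; set u0 := s0 + 2 * sqrtC p0.
have u_ge0 : 0 <= u by rewrite addr_ge0 // divr_ge0 ?sqrtC_ge0 ?addr_ge0 // ltW.
have u0_gt0 : 0 < u0 by rewrite ltr_wpDl // mulr_gt0 ?sqrtC_gt0.
(* Tangent-line bounds for [sqrtC]: at [p0] inside the radical, then at [u0] outside. *)
have radicand_le : s + 2 * sqrtC p <= u ?= iff (p == p0).
  rewrite /u; have -> : (p + p0) / sqrtC p0 = 2 * ((p + p0) / (2 * sqrtC p0)).
    by field; rewrite sqrtC_eq0 gt_eqF.
  rewrite (mono_leif (lerD2l s)) (mono_leif (ler_pM2l (ltr0Sn _ 1))).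
  exact: sqrtC_leif_tangent.
have radicand_ge0 : 0 <= s + 2 * sqrtC p by rewrite addr_ge0 ?mulr_ge0 ?sqrtC_ge0.
have root_le : pair_nuc s p <= sqrtC u ?= iff (p == p0).
  by rewrite /pair_nuc (mono_in_leif (@ler_sqrtC C)) ?nnegrE.
have := leif_trans root_le (sqrtC_leif_tangent u_ge0 u0_gt0).
congr (_ <= _ ?= iff _); rewrite /u /u0; have [->|] := eqVneq p p0; last by rewrite andbF.
by rewrite two_p0 (inj_eq (addIr _)) andbT.
Qed.

Lemma pair_tangent_at (s0 p0 : C) : 0 <= s0 -> 0 < p0 ->
  pair_tangent s0 p0 s0 p0 = pair_nuc s0 p0.
Proof.
move=> s0_ge0 p0_gt0.
have [_] := pair_nuc_leif_tangent s0_ge0 p0_gt0 s0_ge0 (ltW p0_gt0).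
by rewrite !eqxx => /eqP.
Qed.

Lemma pair_tangentE (s0 p0 s p : C) : pair_tangent s0 p0 s p =
  (s + p / sqrtC p0) / (2 * sqrtC (s0 + 2 * sqrtC p0)) + pair_tangent s0 p0 0 0.
Proof. by rewrite /pair_tangent; ring. Qed.

Lemma eq_sum_pair_tangent (I : finType) (P : pred I) (s0 p0 : C) (s p s' p' : I -> C) :
  \sum_(i | P i) s i = \sum_(i | P i) s' i -> \sum_(i | P i) p i = \sum_(i | P i) p' i ->
  \sum_(i | P i) pair_tangent s0 p0 (s i) (p i)
  = \sum_(i | P i) pair_tangent s0 p0 (s' i) (p' i).
Proof.
move=> eq_s eq_p; under eq_bigr do rewrite pair_tangentE.
under [RHS]eq_bigr do rewrite pair_tangentE.
by rewrite !big_split /= -!mulr_suml !big_split /= -!mulr_suml eq_s eq_p.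
Qed.

End SquareRoots.

Section Gram.
Variable R : realType.
Local Notation C := R[i].

Lemma adjmxK m n (A : 'M[C]_(m, n)) : adjmx (adjmx A) = A.
Proof. by apply/matrixP => i j; rewrite !mxE conjcK. Qed.

Lemma adjmx_mul m n p (A : 'M[C]_(m, n)) (B : 'M[C]_(n, p)) :
  adjmx (A *m B) = adjmx B *m adjmx A.
Proof.
apply/matrixP => i j; rewrite !mxE rmorph_sum; apply: eq_bigr => k _.
by rewrite !mxE rmorphM mulrC.
Qed.

Lemma mulmx_adjmx_row n (v : 'rV[C]_n) : (v *m adjmx v) 0 0 = \sum_j `|v 0 j| ^+ 2.
Proof. by rewrite mxE; apply: eq_bigr => j _; rewrite mxE sqr_normc. Qed.

Definition gram m n (A : 'M[C]_(m, n)) : 'M[C]_n := adjmx A *m A.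

Lemma eigenvalue_gram_ge0 m n (A : 'M[C]_(m, n)) z : eigenvalue (gram A) z -> 0 <= z.
Proof.
case/eigenvalueP => v vA v_neq0; set w := v *m adjmx A.
have wv : (w *m adjmx w) 0 0 = z * (v *m adjmx v) 0 0.
  by rewrite adjmx_mul adjmxK mulmxA -(mulmxA v) -/(gram A) vA -scalemxAl mxE.
have v_gt0 : 0 < (v *m adjmx v) 0 0.
  rewrite mulmx_adjmx_row lt_def sumr_ge0 ?andbT => [|j _]; last exact: exprn_ge0.
  apply: contra v_neq0 => /eqP/psumr_eq0P vj0; apply/eqP/rowP => j; rewrite mxE.
  by apply/eqP; rewrite -normr_eq0 -sqrf_eq0 vj0 // => i _; exact: exprn_ge0.
by rewrite -(pmulr_lge0 _ v_gt0) -wv mulmx_adjmx_row sumr_ge0 // => j _; exact: exprn_ge0.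
Qed.

Lemma gram_diag_ge0 m n (A : 'M[C]_(m, n)) i : 0 <= gram A i i.
Proof. by rewrite mxE sumr_ge0 // => k _; rewrite mxE mulrC mul_conjC_ge0. Qed.

Lemma conj_gram m n (A : 'M[C]_(m, n)) i j : conjc (gram A i j) = gram A j i.
Proof.
rewrite !mxE rmorph_sum; apply: eq_bigr => k _.
by rewrite rmorphM /adjmx !mxE /= conjcK mulrC.
Qed.

Lemma char_poly_eig_seq n (B : 'M[C]_n) :
  char_poly B = \prod_(z <- eig_seq B) ('X - z%:P).
Proof.
rewrite /eig_seq; case: closed_field_poly_normal => r /= splitB.
by rewrite {1}splitB (monicP (char_poly_monic B)) scale1r.
Qed.

Lemma eig_seq_gram_ge0 m n (A : 'M[C]_(m, n)) z : z \in eig_seq (gram A) -> 0 <= z.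
Proof.
move=> z_eig; apply: (eigenvalue_gram_ge0 (A := A)).
by rewrite eigenvalue_root_char char_poly_eig_seq root_prod_XsubC.
Qed.

Lemma det_gram_ge0 m n (A : 'M[C]_(m, n)) : 0 <= \det (gram A).
Proof.
rewrite (char_poly_split_det (char_poly_eig_seq _)) big_seq prodr_ge0 // => z.
exact: eig_seq_gram_ge0.
Qed.

Lemma nuclear_norm_two_cols m (A : 'M[C]_(m, 2)) :
  nuclear_norm A = pair_nuc (\tr (gram A)) (\det (gram A)).
Proof.
have splitA := char_poly_eig_seq (gram A).
rewrite (char_poly_split_trace splitA) (char_poly_split_det splitA).
rewrite /nuclear_norm /singular_values big_map -/(gram A).
move: (char_poly_split_size splitA) (@eig_seq_gram_ge0 _ _ A); clear splitA.
case: (eig_seq (gram A)) => [|a [|b []]] // _ ge0.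
rewrite !big_cons !big_nil !addr0 mulr1 /pair_nuc sqrtCD_sqrtC //.
  by apply: ge0; rewrite !inE eqxx.
by apply: ge0; rewrite !inE eqxx orbT.
Qed.

End Gram.

Section TwoColumnBlocks.
Variables (R : realType) (N M : nat).
Local Notation C := R[i].
Implicit Types (Phi : 'M[C]_(N, M)) (K : {set 'I_M}).

(* For [#|K| = 2] these are the trace and the determinant of [gram (subcols Phi K)]. *)
Definition block_trace Phi K := \sum_(x in K) gram Phi x x.
Definition block_minor2 Phi K := \sum_(x in K) \sum_(y in K) minor2 (gram Phi) x y / 2.

Lemma gram_subcols Phi K i j :
  gram (subcols Phi K) i j = gram Phi (enum_val i) (enum_val j).
Proof. by rewrite !mxE; apply: eq_bigr => k _; rewrite !mxE. Qed.

Lemma trace_gram_subcols Phi K : \tr (gram (subcols Phi K)) = block_trace Phi K.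
Proof.
by rewrite /block_trace big_enum_val; apply: eq_bigr => i _; rewrite gram_subcols.
Qed.

Lemma minor2_sum_gram_subcols Phi K :
  minor2_sum (gram (subcols Phi K)) = block_minor2 Phi K.
Proof.
rewrite /block_minor2 big_enum_val; apply: eq_bigr => i _.
by rewrite [RHS]big_enum_val; apply: eq_bigr => j _; rewrite /minor2 !gram_subcols.
Qed.

Lemma nuclear_norm_subcols2 Phi K : #|K| = 2%N ->
  nuclear_norm (subcols Phi K) = pair_nuc (block_trace Phi K) (block_minor2 Phi K).
Proof.
move=> cK; rewrite -trace_gram_subcols -minor2_sum_gram_subcols.
by move: (subcols Phi K); rewrite cK => A; rewrite -det_mx2 nuclear_norm_two_cols.
Qed.

Lemma block_minor2_ge0 Phi K : #|K| = 2%N -> 0 <= block_minor2 Phi K.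
Proof.
move=> cK; rewrite -minor2_sum_gram_subcols.
by move: (subcols Phi K); rewrite cK => A; rewrite -det_mx2 det_gram_ge0.
Qed.

Lemma block_trace_ge0 Phi K : 0 <= block_trace Phi K.
Proof. by rewrite sumr_ge0 // => x _; apply: gram_diag_ge0. Qed.

Lemma nuclear_energy2E Phi : nuclear_energy 2 Phi =
  \sum_(K : {set 'I_M} | #|K| == 2%N) pair_nuc (block_trace Phi K) (block_minor2 Phi K).
Proof. by apply: eq_bigr => K /eqP; apply: nuclear_norm_subcols2. Qed.

Lemma sum_block_trace Phi :
  \sum_(K : {set 'I_M} | #|K| == 2%N) block_trace Phi K = \tr (gram Phi) *+ M.-1.
Proof. by rewrite sum_card2_sets_mem card_ord. Qed.

Lemma sum_block_minor2 Phi :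
  \sum_(K : {set 'I_M} | #|K| == 2%N) block_minor2 Phi K = minor2_sum (gram Phi).
Proof. by rewrite sum_card2_sets // => x; rewrite /minor2 subrr mul0r. Qed.

Lemma block_trace_set2 Phi i j : i != j ->
  block_trace Phi [set i; j] = gram Phi i i + gram Phi j j.
Proof. exact: sum_set2. Qed.

Lemma block_minor2_set2 Phi i j : i != j ->
  block_minor2 Phi [set i; j] = gram Phi i i * gram Phi j j - `|gram Phi i j| ^+ 2.
Proof.
move=> ij; rewrite /block_minor2 !sum_set2 // /minor2 !subrr !mul0r add0r addr0.
by rewrite sqr_normc conj_gram; field.
Qed.

End TwoColumnBlocks.

Section ParsevalFrames.
Variables (R : realType) (N M : nat).
Local Notation C := R[i].
Implicit Type Phi : 'M[C]_(N, M).

Lemma gram_parseval_idem Phi : Phi *m adjmx Phi = 1%:M -> gram Phi *m gram Phi = gram Phi.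
Proof. by move=> PF; rewrite mulmxA -(mulmxA (adjmx Phi)) PF mulmx1. Qed.

Lemma trace_gram_parseval Phi : Phi *m adjmx Phi = 1%:M -> \tr (gram Phi) = N%:R.
Proof. by move=> PF; rewrite mxtrace_mulC PF mxtrace1. Qed.

Lemma gram_parseval_diag_le1 Phi i : Phi *m adjmx Phi = 1%:M -> gram Phi i i <= 1.
Proof.
move=> PF; have Gii_ge0 := gram_diag_ge0 Phi i.
have : gram Phi i i * gram Phi i i <= gram Phi i i.
  rewrite -[in X in _ <= X](gram_parseval_idem PF) [X in _ <= X]mxE (bigD1 i) //= lerDl.
  by rewrite sumr_ge0 // => k _; rewrite -conj_gram mulrC mul_conjC_ge0.
have [->|Gii_neq0] := eqVneq (gram Phi i i) 0; first by rewrite ler01.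
have Gii_gt0 : 0 < gram Phi i i by rewrite lt_def Gii_neq0.
by move=> GG; rewrite -(ler_pM2l Gii_gt0) mulr1.
Qed.

Lemma inner_col Phi i j : inner (col i Phi) (col j Phi) = gram Phi j i.
Proof. by rewrite /inner mxE; apply: eq_bigr => k _; rewrite !mxE mulrC. Qed.

Lemma vnorm_col Phi i : vnorm (col i Phi) = sqrtC (gram Phi i i).
Proof. by rewrite /vnorm inner_col. Qed.

Lemma equiangular_gramP Phi : equiangular Phi <->
  (forall i j, gram Phi i i = gram Phi j j) /\
  (forall i j k l, i != j -> k != l -> `|gram Phi i j| = `|gram Phi k l|).
Proof.
split=> [[eq_norm eq_angle]|[eq_diag eq_off]]; split.
- by move=> i j; apply: sqrtC_inj; rewrite -!vnorm_col.
- by move=> i j k l ij kl; rewrite -!inner_col; apply: eq_angle; rewrite eq_sym.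
- by move=> i j; rewrite !vnorm_col (eq_diag i j).
- by move=> i j k l ij kl; rewrite !inner_col; apply: eq_off; rewrite eq_sym.
Qed.

Definition uniform_pairs Phi (s0 p0 : C) : bool :=
  [forall (K : {set 'I_M} | #|K| == 2%N),
     (block_trace Phi K == s0) && (block_minor2 Phi K == p0)].

Lemma uniform_pairsP Phi (s0 p0 : C) :
  reflect (forall i j, i != j ->
             block_trace Phi [set i; j] = s0 /\ block_minor2 Phi [set i; j] = p0)
          (uniform_pairs Phi s0 p0).
Proof.
apply: (iffP forall_inP) => [U i j ij | U _ /cards2P[i [j [ij ->]]]].
  by have := U [set i; j]; rewrite cards2 ij => /(_ isT)/andP[/eqP-> /eqP->].
by have [-> ->] := U i j ij; rewrite !eqxx.
Qed.

Lemma equiangular_uniform_pairs Phi : equiangular Phi ->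
  exists s0 p0, uniform_pairs Phi s0 p0.
Proof.
move/equiangular_gramP=> [eq_diag eq_off].
have [K0 /cards2P[i0 [j0 [ij0 _]]] | no_pair] := pickP (fun K : {set 'I_M} => #|K| == 2%N).
  exists (block_trace Phi [set i0; j0]), (block_minor2 Phi [set i0; j0]).
  apply/uniform_pairsP => i j ij.
  rewrite !block_trace_set2 // !block_minor2_set2 //.
  by rewrite (eq_diag i i0) (eq_diag j j0) (eq_off i j i0 j0).
by exists 0, 0; apply/forall_inP => K; rewrite no_pair.
Qed.

Lemma uniform_pairs_gram_diag Phi (s0 p0 : C) : (2 <= N)%N -> Phi *m adjmx Phi = 1%:M ->
  uniform_pairs Phi s0 p0 -> forall i j, gram Phi i i = gram Phi j j.
Proof.
move=> N_ge2 PF /uniform_pairsP U i j; have [-> //|ij] := eqVneq i j.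
have [k /andP[ik jk] | only_ij] := pickP (fun k => (i != k) && (j != k)).
  have [+ _] := U i k ik; have [+ _] := U j k jk.
  by rewrite !block_trace_set2 // => <- /addIr.
(* Only two vectors: [G_ii + G_jj = tr G = N >= 2] while [G_ii, G_jj <= 1]. *)
have trG : gram Phi i i + gram Phi j j = N%:R.
  rewrite -(trace_gram_parseval PF) -(sum_set2 (fun x => gram Phi x x) ij).
  by apply: eq_bigl => x; apply/negbFE; rewrite !inE negb_or !(eq_sym x) only_ij.
have : (1 - gram Phi i i) + (1 - gram Phi j j) == 0.
  rewrite eq_le addr_ge0 ?subr_ge0 ?gram_parseval_diag_le1 // andbT.
  by rewrite addrACA -opprD trG subr_le0 -mulr2n ler_nat.
rewrite paddr_eq0 ?subr_ge0 ?gram_parseval_diag_le1 // !subr_eq0.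
by case/andP=> /eqP<- /eqP<-.
Qed.

Lemma uniform_pairs_equiangular Phi (s0 p0 : C) : (2 <= N)%N ->
  Phi *m adjmx Phi = 1%:M -> uniform_pairs Phi s0 p0 -> equiangular Phi.
Proof.
move=> N_ge2 PF U; have eq_diag := uniform_pairs_gram_diag N_ge2 PF U.
apply/equiangular_gramP; split=> // i j k l ij kl.
move/uniform_pairsP: U => U; have [_ minor_ij] := U i j ij; have [_] := U k l kl.
rewrite -minor_ij !block_minor2_set2 // (eq_diag k i) (eq_diag l j) => /subrI/eqP.
by rewrite eqrXn2 ?normr_ge0 // => /eqP.
Qed.

Lemma sum_block_trace_parseval Phi : Phi *m adjmx Phi = 1%:M ->
  \sum_(K : {set 'I_M} | #|K| == 2%N) block_trace Phi K = N%:R *+ M.-1.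
Proof. by move=> PF; rewrite sum_block_trace trace_gram_parseval. Qed.

Lemma sum_block_minor2_parseval Phi : Phi *m adjmx Phi = 1%:M ->
  \sum_(K : {set 'I_M} | #|K| == 2%N) block_minor2 Phi K = (N%:R ^+ 2 - N%:R) / 2.
Proof.
move=> PF; rewrite sum_block_minor2 minor2_sum_trace.
by rewrite gram_parseval_idem ?trace_gram_parseval.
Qed.

End ParsevalFrames.

Section EnergyComparison.
Variables (R : realType) (N M : nat) (Phi0 : 'M[R[i]]_(N, M)) (s0 p0 : R[i]).
Hypotheses (N_ge2 : (2 <= N)%N) (Phi0_parseval : Phi0 *m adjmx Phi0 = 1%:M)
  (Phi0_uniform : uniform_pairs Phi0 s0 p0).

Let Phi0_pair (K : {set 'I_M}) :
  #|K| == 2%N -> block_trace Phi0 K = s0 /\ block_minor2 Phi0 K = p0.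
Proof. by move/(forall_inP Phi0_uniform)/andP=> [/eqP-> /eqP->]. Qed.

Lemma uniform_pair_bounds : 0 <= s0 /\ 0 < p0.
Proof.
have sum_gt0 : 0 < \sum_(K : {set 'I_M} | #|K| == 2%N) block_minor2 Phi0 K.
  rewrite sum_block_minor2_parseval // divr_gt0 // subr_gt0 expr2 -natrM ltr_nat.
  by rewrite ltn_Pmull // ltnW.
have [K0 cK0 | no_pair] := pickP (fun K : {set 'I_M} => #|K| == 2%N); last first.
  by move: sum_gt0; rewrite big_pred0 ?ltxx.
have [<- p0E] := Phi0_pair cK0; split; first exact: block_trace_ge0.
rewrite -p0E lt_def block_minor2_ge0 ?(eqP cK0) // andbT p0E.
apply: contraTneq sum_gt0 => p0_eq0.
by rewrite big1 ?ltxx // => K /Phi0_pair[_ ->].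
Qed.

Lemma nuclear_energy2_leif (Psi : 'M[R[i]]_(N, M)) : Psi *m adjmx Psi = 1%:M ->
  nuclear_energy 2 Psi <= nuclear_energy 2 Phi0 ?= iff uniform_pairs Psi s0 p0.
Proof.
move=> Psi_parseval; have [s0_ge0 p0_gt0] := uniform_pair_bounds.
have same_trace : \sum_(K : {set 'I_M} | #|K| == 2%N) block_trace Psi K
                  = \sum_(K : {set 'I_M} | #|K| == 2%N) block_trace Phi0 K.
  by rewrite !sum_block_trace_parseval.
have same_minor2 : \sum_(K : {set 'I_M} | #|K| == 2%N) block_minor2 Psi K
                   = \sum_(K : {set 'I_M} | #|K| == 2%N) block_minor2 Phi0 K.
  by rewrite !sum_block_minor2_parseval.
have <- : \sum_(K : {set 'I_M} | #|K| == 2%N)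
    pair_tangent s0 p0 (block_trace Psi K) (block_minor2 Psi K) = nuclear_energy 2 Phi0.
  rewrite nuclear_energy2E (eq_sum_pair_tangent s0 p0 same_trace same_minor2).
  by apply: eq_bigr => K /Phi0_pair[-> ->]; rewrite pair_tangent_at.
rewrite nuclear_energy2E; apply: leif_sum => K cK.
by apply: pair_nuc_leif_tangent; rewrite ?block_trace_ge0 ?block_minor2_ge0 ?(eqP cK).
Qed.

End EnergyComparison.

Theorem theorem15 (R : realType) (F : scalar_field) (N M : nat) :
  (2 <= N)%N ->
  (exists Phi0 : 'M[R[i]]_(N, M), equiangular_parseval_frame F Phi0) ->
  forall Phi : 'M[R[i]]_(N, M), parseval_frame F Phi ->
    ((forall Psi : 'M[R[i]]_(N, M), parseval_frame F Psi ->
        nuclear_energy 2 Psi <= nuclear_energy 2 Phi)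
     <-> equiangular_parseval_frame F Phi).
Proof.
move=> N_ge2 [Phi0 [[Phi0_field Phi0_parseval] Phi0_equi]] Phi [Phi_field Phi_parseval].
split=> [Phi_max | [_ Phi_equi] Psi [_ Psi_parseval]].
- have [s0 [p0 Phi0_uniform]] := equiangular_uniform_pairs Phi0_equi.
  have Phi_leif := nuclear_energy2_leif N_ge2 Phi0_parseval Phi0_uniform Phi_parseval.
  have Phi_uniform : uniform_pairs Phi s0 p0.
    by rewrite -(ge_leif Phi_leif); apply: Phi_max.
  split; first by split.
  exact: uniform_pairs_equiangular N_ge2 Phi_parseval Phi_uniform.
- have [s0 [p0 Phi_uniform]] := equiangular_uniform_pairs Phi_equi.
  by have [] := nuclear_energy2_leif N_ge2 Phi_parseval Phi_uniform Psi_parseval.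
Qed.
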